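(* Let $r\ge2$ be an integer and let $\theta\in C_p(\mathbb{R})$ satisfy $\theta(x)=x^2$ for $x\in[0,\frac1r]$, $\theta\in C^2(\mathbb{R})$, and $\theta>0$ on $(0,1)$. Then $\Delta_{n,0}(\tfrac1r;U_\theta)=-\frac{2}{r-1}$ for every $n\in\mathbb{N}_0$. Consequently $U_\theta\notin\mathcal{P}$.
   Context: $C_p(\mathbb{R})$ denotes the set of all continuous functions $f:\mathbb{R}\to\mathbb{R}$ periodic with period $1$ with $f(0)=0$; $\mathbb{N}_0=\mathbb{N}\cup\{0\}$. For $\psi\in C_p(\mathbb{R})$, $U_\psi(x)=\sum_{j=0}^\infty r^{-j}\psi(r^jx)$. For $f\in C_p(\mathbb{R})$ and $(n,k,y)\in\mathbb{N}_0\times\mathbb{Z}\times(0,1)$: $\delta^+_{n,k}(y;f)=\dfrac{f(\frac{k+1}{r^n})-f(\frac{k+y}{r^n})}{\frac{1-y}{r^n}}$, $\delta^-_{n,k}(y;f)=\dfrac{f(\frac{k+y}{r^n})-f(\frac{k}{r^n})}{\frac{y}{r^n}}$, $\Delta_{n,k}(y;f)=2r^n(\delta^+_{n,k}(y;f)-\delta^-_{n,k}(y;f))$. For $c>0$, $\mathcal{P}_c$ is the set of $f\in C_p(\mathbb{R})$ with $\delta^+_{n,k}(y;f)-\delta^-_{n,k}(y;f)\le-c$ for all $(n,k,y)\in\mathbb{N}_0\times\mathbb{Z}\times(0,1)$, and $\mathcal{P}=\bigcup_{c>0}\mathcal{P}_c$. *)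

From Stdlib Require Import Reals.
From Coquelicot Require Import Coquelicot.
Open Scope R_scope.

Definition Cp (f : R -> R) : Prop :=
  (forall x, continuous f x) /\ (forall x, f (x + 1) = f x) /\ f 0 = 0.

Definition C2 (f : R -> R) : Prop :=
  (forall x, ex_derive f x) /\
  (forall x, ex_derive (Derive f) x) /\
  (forall x, continuous (Derive_n f 2) x).

Definition U (r : R) (psi : R -> R) (x : R) : R :=
  Series (fun j : nat => / r ^ j * psi (r ^ j * x)).

Definition delta_plus (r : R) (n : nat) (k : Z) (y : R) (f : R -> R) : R :=
  (f ((IZR k + 1) / r ^ n) - f ((IZR k + y) / r ^ n)) / ((1 - y) / r ^ n).

Definition delta_minus (r : R) (n : nat) (k : Z) (y : R) (f : R -> R) : R :=
  (f ((IZR k + y) / r ^ n) - f (IZR k / r ^ n)) / (y / r ^ n).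

Definition Delta_nk (r : R) (n : nat) (k : Z) (y : R) (f : R -> R) : R :=
  2 * r ^ n * (delta_plus r n k y f - delta_minus r n k y f).

Definition P_c (r c : R) (f : R -> R) : Prop :=
  Cp f /\
  forall (n : nat) (k : Z) (y : R), 0 < y < 1 ->
    delta_plus r n k y f - delta_minus r n k y f <= - c.

Definition P_class (r : R) (f : R -> R) : Prop :=
  exists c : R, 0 < c /\ P_c r c f.

(** The series defining [U_theta] satisfies the self-similarity
    [U(x) = theta(x) + U(r x) / r], and at [x = r^-(n+1) <= 1/r] the first term
    is [x^2].  Together with [U(0) = 0] this alone determines the second
    difference at [(n, 0, 1/r)]: the unknown value [U(r^-n)] cancels and
    [delta+ - delta- = - r^-n / (r - 1)].  Hence [Delta_{n,0}] is constant,
    while [delta+ - delta-] tends to [0], which rules out any uniform bound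
    [<= -c]. *)

From Stdlib Require Import Reals Lra Lia.
From Coquelicot Require Import Coquelicot.
Open Scope R_scope.

Lemma is_series_eventually_0 (a : nat -> R) (N : nat) :
  (forall k, (N < k)%nat -> a k = 0) -> is_series a (sum_n a N).
Proof.
  intros a_tail.
  enough (lim : is_lim_seq (sum_n a) (sum_n a N)) by exact lim.
  apply (is_lim_seq_ext_loc (fun _ => sum_n a N)); [|apply is_lim_seq_const].
  exists N; intros k le_Nk; induction le_Nk as [|k le_Nk IHk]; [reflexivity|].
  rewrite sum_Sn, a_tail by lia.
  change (plus ?u ?v) with (u + v); rewrite Rplus_0_r; exact IHk.
Qed.

Lemma is_lim_seq_inv_pow_div (q d : R) :
  1 < q -> is_lim_seq (fun n => - (/ q ^ n / d)) 0.
Proof.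
  intros q_gt1.
  replace (Finite 0) with (Rbar_opp (Rbar_mult 0 (/ d))) by (simpl; f_equal; ring).
  apply -> is_lim_seq_opp.
  apply (is_lim_seq_ext (fun n => (/ q) ^ n * / d)).
  { intros n; rewrite pow_inv; reflexivity. }
  apply is_lim_seq_scal_r, is_lim_seq_geom.
  rewrite Rabs_pos_eq by (apply Rlt_le, Rinv_0_lt_compat; lra).
  rewrite <- Rinv_1; apply Rinv_lt_contravar; lra.
Qed.

Lemma periodic_vanishes_at_nat (f : R -> R) (m : nat) :
  (forall x, f (x + 1) = f x) -> f 0 = 0 -> f (INR m) = 0.
Proof.
  intros f_periodic f0; induction m as [|m IHm]; [exact f0|].
  rewrite S_INR, f_periodic; exact IHm.
Qed.

Lemma U_0 (r : R) (psi : R -> R) : psi 0 = 0 -> U r psi 0 = 0.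
Proof.
  intros psi0; unfold U.
  assert (terms0 : forall j, / r ^ j * psi (r ^ j * 0) = 0)
    by (intros j; rewrite Rmult_0_r, psi0; ring).
  rewrite (is_series_unique _ _ (is_series_eventually_0 _ 0 (fun j _ => terms0 j))).
  rewrite sum_O; apply terms0.
Qed.

Lemma U_self_similar (r : R) (psi : R -> R) (x : R) :
  ex_series (fun j => / r ^ j * psi (r ^ j * x)) ->
  U r psi x = psi x + U r psi (r * x) / r.
Proof.
  intros summable; unfold U.
  rewrite Series_incr_1 by exact summable; f_equal.
  - simpl; rewrite Rinv_1, !Rmult_1_l; reflexivity.
  - rewrite Rdiv_def, Rmult_comm, <- Series_scal_l.
    apply Series_ext; intros j; simpl.
    replace (r ^ j * (r * x)) with (r * r ^ j * x) by ring.
    rewrite Rinv_mult; ring.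
Qed.

Section Inverse_powers.

Variables (r : nat) (theta : R -> R).
Hypothesis r_pos : (0 < r)%nat.
Hypothesis theta_periodic : forall x, theta (x + 1) = theta x.
Hypothesis theta0 : theta 0 = 0.
Hypothesis theta_sq : forall x : R, 0 <= x <= / INR r -> theta x = x ^ 2.

Local Notation q := (INR r).

Let q_ge1 : 1 <= q.
Proof. apply (le_INR 1); lia. Qed.

Let qpow_pos n : 0 < q ^ n.
Proof. apply pow_lt; lra. Qed.

(* Past [j = n] the argument [r^j / r^n] is an integer, where [theta] vanishes. *)
Lemma ex_series_U_inv_pow (n : nat) :
  ex_series (fun j => / q ^ j * theta (q ^ j * / q ^ n)).
Proof.
  eexists; apply (is_series_eventually_0 _ n); intros j lt_nj.
  replace (q ^ j * / q ^ n) with (INR (r ^ (j - n))).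
  - rewrite periodic_vanishes_at_nat by assumption; ring.
  - replace (q ^ j) with (q ^ (j - n) * q ^ n) by (rewrite <- pow_add; f_equal; lia).
    rewrite pow_INR; field; apply Rgt_not_eq, qpow_pos.
Qed.

Lemma U_inv_pow_succ (n : nat) :
  U q theta (/ q ^ S n) = (/ q ^ S n) ^ 2 + U q theta (/ q ^ n) / q.
Proof.
  pose proof (qpow_pos n).
  rewrite U_self_similar.
  - rewrite theta_sq.
    + f_equal; f_equal; f_equal; simpl; field; lra.
    + simpl; rewrite Rinv_mult; split.
      * apply Rmult_le_pos; apply Rlt_le, Rinv_0_lt_compat; lra.
      * rewrite <- (Rmult_1_r (/ q)) at 2; apply Rmult_le_compat_l.
        -- apply Rlt_le, Rinv_0_lt_compat; lra.
        -- rewrite <- Rinv_1; apply Rinv_le_contravar; [lra|].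
           apply pow_R1_Rle; exact q_ge1.
  - exact (ex_series_U_inv_pow (S n)).
Qed.

End Inverse_powers.

Lemma delta_gap_at_inv_base (q : R) (f : R -> R) (n : nat) :
  1 < q -> f 0 = 0 ->
  f (/ q ^ S n) = (/ q ^ S n) ^ 2 + f (/ q ^ n) / q ->
  delta_plus q n 0 (/ q) f - delta_minus q n 0 (/ q) f = - (/ q ^ n / (q - 1)).
Proof.
  intros q_gt1 f0 f_step.
  assert (0 < q ^ n) by (apply pow_lt; lra).
  unfold delta_plus, delta_minus.
  replace ((IZR 0 + 1) / q ^ n) with (/ q ^ n) by (simpl; field; lra).
  replace ((IZR 0 + / q) / q ^ n) with (/ q ^ S n) by (simpl; field; lra).
  replace (IZR 0 / q ^ n) with 0 by (simpl; field; lra).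
  rewrite f_step, f0; simpl; field; lra.
Qed.

Lemma not_P_class_of_vanishing_gap (q : R) (f : R -> R) (k : Z) (y : R) :
  0 < y < 1 ->
  is_lim_seq (fun n => delta_plus q n k y f - delta_minus q n k y f) 0 ->
  ~ P_class q f.
Proof.
  intros y_in gap_lim [c [c_pos [_ gap_le]]].
  assert (lim_le : Rbar_le 0 (- c)).
  { apply (is_lim_seq_le _ (fun _ => - c) _ _ (fun n => gap_le n k y y_in)).
    - exact gap_lim.
    - apply is_lim_seq_const. }
  simpl in lim_le; lra.
Qed.

Theorem theorem3p9 (r : nat) (theta : R -> R)
  (hr : (2 <= r)%nat)
  (hCp : Cp theta)
  (hsq : forall x : R, 0 <= x <= / INR r -> theta x = x ^ 2)
  (hC2 : C2 theta)
  (hpos : forall x : R, 0 < x < 1 -> 0 < theta x) :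
  (forall n : nat,
     Delta_nk (INR r) n 0%Z (/ INR r) (U (INR r) theta) = - (2 / (INR r - 1)))
  /\ ~ P_class (INR r) (U (INR r) theta).
Proof.
  (* [hC2] and [hpos] only make [theta] a genuine example. *)
  destruct hCp as [_ [theta_periodic theta0]].
  assert (q_gt1 : 1 < INR r) by (apply (lt_INR 1); lia).
  assert (gap : forall n,
    delta_plus (INR r) n 0 (/ INR r) (U (INR r) theta)
    - delta_minus (INR r) n 0 (/ INR r) (U (INR r) theta)
    = - (/ INR r ^ n / (INR r - 1))).
  { intros n; apply delta_gap_at_inv_base; [exact q_gt1 | apply U_0, theta0 |].
    apply U_inv_pow_succ; [lia | assumption..]. }
  split.
  - intros n; unfold Delta_nk; rewrite gap.
    assert (0 < INR r ^ n) by (apply pow_lt; lra).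
    field; lra.
  - apply (not_P_class_of_vanishing_gap _ _ 0 (/ INR r)).
    + split; [apply Rinv_0_lt_compat; lra|].
      rewrite <- Rinv_1; apply Rinv_lt_contravar; lra.
    + apply (is_lim_seq_ext _ _ _ (fun n => eq_sym (gap n))).
      apply is_lim_seq_inv_pow_div; exact q_gt1.
Qed.
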